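(* Suppose Assumptions 1–4 hold and $p$ is convex. Let $\mathbf{x}$ be a Cournot candidate and $\mathbf{x}^S$ a social optimum. If $p(X)=p(X^S)$, then $p'(X)=0$ and $\gamma(\mathbf{x})=1$.
   Context: Cournot model: $N$ suppliers, inverse demand $p:[0,\infty)\to[0,\infty)$, supplier $n$ has cost $C_n:[0,\infty)\to[0,\infty)$ and chooses $x_n\ge0$; $X=\sum_n x_n$, $X^S=\sum_n x_n^S$. $\partial_\pm$ denote right/left derivatives; $C_n'(0)$ is the right derivative at $0$. Assumption 1: each $C_n$ is convex, continuous, nondecreasing on $[0,\infty)$, continuously differentiable on $(0,\infty)$, with $C_n(0)=0$. Assumption 2: $p$ is continuous, nonnegative, nonincreasing, $p(0)>0$; its right derivative at $0$ exists and at every $q>0$ its left and right derivatives exist. Assumption 3: there exists $R>0$ such that $p(R)\le\min_n C_n'(0)$. Assumption 4: $p(0)>\min_n C_n'(0)$. Social welfare of $\mathbf{x}\ge0$: $W(\mathbf{x})=\int_0^X p(q)\,dq-\sum_{n=1}^N C_n(x_n)$; a social optimum maximizes $W$. Efficiency: $\gamma(\mathbf{x})=W(\mathbf{x})/W(\mathbf{x}^S)$ for a social optimum $\mathbf{x}^S$. A nonnegative vector $\mathbf{x}$ is a Cournot candidate if for every $n$: $C_n'(x_n)\le p(X)+x_n\,\partial_-p(X)$ whenever $x_n>0$, and $C_n'(x_n)\ge p(X)+x_n\,\partial_+p(X)$. (For convex $p$ and $X>0$, $p$ is differentiable at $X$.) *)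

From Stdlib Require Import Reals Lra List ClassicalEpsilon.
Open Scope R_scope.

Definition sumN (N : nat) (f : nat -> R) : R :=
  fold_right Rplus 0 (map f (seq 0 N)).

(* Riemann integral of f on [a,b] (value of RiemannInt when f is integrable;
   RiemannInt is proof-irrelevant). *)
Definition integral (f : R -> R) (a b : R) : R :=
  epsilon (inhabits 0)
    (fun I => exists pr : Riemann_integrable f a b, RiemannInt pr = I).

Definition right_deriv (f : R -> R) (x l : R) : Prop :=
  forall eps, 0 < eps -> exists delta, 0 < delta /\
    forall h, 0 < h < delta -> Rabs ((f (x + h) - f x) / h - l) < eps.

Definition left_deriv (f : R -> R) (x l : R) : Prop :=
  forall eps, 0 < eps -> exists delta, 0 < delta /\
    forall h, - delta < h < 0 -> Rabs ((f (x + h) - f x) / h - l) < eps.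

Definition convex_nonneg (f : R -> R) : Prop :=
  forall a b t, 0 <= a -> 0 <= b -> 0 <= t <= 1 ->
    f (t * a + (1 - t) * b) <= t * f a + (1 - t) * f b.

Definition continuous_nonneg (f : R -> R) : Prop :=
  forall x, 0 <= x -> forall eps, 0 < eps -> exists delta, 0 < delta /\
    forall y, 0 <= y -> Rabs (y - x) < delta -> Rabs (f y - f x) < eps.

Definition nondecreasing_nonneg (f : R -> R) : Prop :=
  forall a b, 0 <= a -> a <= b -> f a <= f b.

Definition nonincreasing_nonneg (f : R -> R) : Prop :=
  forall a b, 0 <= a -> a <= b -> f b <= f a.

(* Assumption 1 for one cost function C with derivative function dC:
   dC y is the derivative of C at y > 0 and dC 0 is the right derivative at 0. *)
Definition cost_assumption (C dC : R -> R) : Prop :=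
  convex_nonneg C /\ continuous_nonneg C /\ nondecreasing_nonneg C /\
  (forall y, 0 < y -> derivable_pt_lim C y (dC y)) /\
  (forall y, 0 < y -> continuity_pt dC y) /\
  right_deriv C 0 (dC 0) /\
  C 0 = 0.

(* Assumption 2; dpr q = right derivative of p at q >= 0,
   dpl q = left derivative of p at q > 0. *)
Definition price_assumption (p dpr dpl : R -> R) : Prop :=
  continuous_nonneg p /\
  (forall q, 0 <= q -> 0 <= p q) /\
  nonincreasing_nonneg p /\
  0 < p 0 /\
  (forall q, 0 <= q -> right_deriv p q (dpr q)) /\
  (forall q, 0 < q -> left_deriv p q (dpl q)).

Definition nonneg_vec (N : nat) (x : nat -> R) : Prop :=
  forall n, (n < N)%nat -> 0 <= x n.

Definition total (N : nat) (x : nat -> R) : R := sumN N x.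

Definition welfare (N : nat) (p : R -> R) (C : nat -> R -> R) (x : nat -> R) : R :=
  integral p 0 (total N x) - sumN N (fun n => C n (x n)).

Definition social_optimum (N : nat) (p : R -> R) (C : nat -> R -> R)
    (xS : nat -> R) : Prop :=
  nonneg_vec N xS /\
  forall y, nonneg_vec N y -> welfare N p C y <= welfare N p C xS.

Definition efficiency (N : nat) (p : R -> R) (C : nat -> R -> R)
    (x xS : nat -> R) : R :=
  welfare N p C x / welfare N p C xS.

Definition cournot_candidate (N : nat) (p dpr dpl : R -> R)
    (dC : nat -> R -> R) (x : nat -> R) : Prop :=
  nonneg_vec N x /\
  forall n, (n < N)%nat ->
    (0 < x n -> dC n (x n) <= p (total N x) + x n * dpl (total N x)) /\
    p (total N x) + x n * dpr (total N x) <= dC n (x n).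

(* Write X = total x and XS = total xS.  A supplier with positive
   output at x gives dpr X <= dpl X, and monotonicity gives dpl X <= 0.
   - If X < XS, p is constant on [X, XS] (it is nonincreasing with equal end
     values), so dpr X = 0.
   - If XS <= X, some producing supplier has x n >= xS n; the first-order
     condition of the optimum, p XS <= dC n (xS n) <= dC n (x n), together with
     the Cournot condition dC n (x n) <= p X + x n * dpl X gives dpl X >= 0,
     and convexity of p gives dpl X <= dpr X.
   Either way both one-sided derivatives of p at X vanish.  Then every
   supplier's marginal cost at x is at least p X (equal if it produces), so by
   the tangent inequality for convex costs the cost saved by x relative to xS
   is at least p X * (XS - X), which bounds the extra consumer value; hence
   W x >= W xS > 0 and the efficiency is 1. *)

From Stdlib Require Import Reals Lra Lia List ClassicalEpsilon Classical.
Open Scope R_scope.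

Lemma sumN_S N f : sumN (S N) f = sumN N f + f N.
Proof.
  unfold sumN. rewrite seq_S, map_app, fold_right_app. simpl.
  generalize (f N). induction (map f (seq 0 N)) as [|a l IH]; intros r; simpl.
  - ring.
  - rewrite IH. ring.
Qed.

Lemma sumN_ext N f g : (forall m, (m < N)%nat -> f m = g m) -> sumN N f = sumN N g.
Proof.
  induction N as [|N IH]; intros H; [reflexivity|].
  rewrite !sumN_S, IH, H; auto; intros; apply H; lia.
Qed.

Lemma sumN_le N f g : (forall m, (m < N)%nat -> f m <= g m) -> sumN N f <= sumN N g.
Proof.
  induction N as [|N IH]; intros H; [unfold sumN; simpl; lra|].
  rewrite !sumN_S.
  assert (f N <= g N) by (apply H; lia).
  assert (sumN N f <= sumN N g) by (apply IH; intros; apply H; lia).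
  lra.
Qed.

Lemma sumN_lt N f g n : (forall m, (m < N)%nat -> f m <= g m) -> (n < N)%nat ->
  f n < g n -> sumN N f < sumN N g.
Proof.
  induction N as [|N IH]; intros H Hn Hlt; [lia|].
  rewrite !sumN_S.
  assert (f N <= g N) by (apply H; lia).
  destruct (Nat.eq_dec n N) as [->|Hne].
  - assert (sumN N f <= sumN N g) by (apply sumN_le; intros; apply H; lia). lra.
  - assert (sumN N f < sumN N g) by (apply IH; [intros; apply H; lia | lia | exact Hlt]).
    lra.
Qed.

Lemma sumN_minus N f g : sumN N (fun m => f m - g m) = sumN N f - sumN N g.
Proof. induction N as [|N IH]; [unfold sumN; simpl; ring|]. rewrite !sumN_S, IH. ring. Qed.

Lemma sumN_scal N c f : sumN N (fun m => c * f m) = c * sumN N f.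
Proof. induction N as [|N IH]; [unfold sumN; simpl; ring|]. rewrite !sumN_S, IH. ring. Qed.

Lemma sumN_zero N : sumN N (fun _ => 0) = 0.
Proof. induction N as [|N IH]; [reflexivity|]. rewrite sumN_S, IH. ring. Qed.

Lemma sumN_nonneg N f : (forall m, (m < N)%nat -> 0 <= f m) -> 0 <= sumN N f.
Proof. intros H. rewrite <- (sumN_zero N). apply sumN_le. auto. Qed.

Lemma sumN_ge_term N f n : (forall m, (m < N)%nat -> 0 <= f m) -> (n < N)%nat ->
  f n <= sumN N f.
Proof.
  induction N as [|N IH]; intros H Hn; [lia|]. rewrite sumN_S.
  assert (0 <= f N) by (apply H; lia).
  assert (0 <= sumN N f) by (apply sumN_nonneg; intros; apply H; lia).
  destruct (Nat.eq_dec n N) as [->|Hne]; [lra|].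
  assert (f n <= sumN N f) by (apply IH; [intros; apply H; lia | lia]).
  lra.
Qed.

Lemma sumN_upd N f g n : (n < N)%nat -> (forall m, m <> n -> g m = f m) ->
  sumN N g = sumN N f + (g n - f n).
Proof.
  induction N as [|N IH]; intros Hn H; [lia|]. rewrite !sumN_S.
  destruct (Nat.eq_dec n N) as [->|Hne].
  - rewrite (sumN_ext N g f); [ring|]. intros; apply H; lia.
  - rewrite IH; [|lia|exact H]. rewrite (H N) by lia. ring.
Qed.

Lemma sumN_pos_witness N f : 0 < sumN N f -> exists n, (n < N)%nat /\ 0 < f n.
Proof.
  intros Hpos. apply NNPP. intros Hno.
  assert (sumN N f <= sumN N (fun _ => 0)).
  { apply sumN_le. intros m Hm. apply Rnot_lt_le. intros Hm'. apply Hno; eauto. }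
  rewrite sumN_zero in H. lra.
Qed.

Lemma sumN_dominating_term N f g n1 :
  (forall m, (m < N)%nat -> 0 <= g m) -> (n1 < N)%nat -> 0 < f n1 ->
  sumN N g <= sumN N f -> exists n, (n < N)%nat /\ 0 < f n /\ g n <= f n.
Proof.
  intros Hg Hn1 Hf1 Hsum. apply NNPP. intros Hno.
  assert (Hfg : forall m, (m < N)%nat -> 0 < f m -> f m < g m).
  { intros m Hm Hfm. apply Rnot_le_lt. intros Hle. apply Hno; eauto. }
  assert (sumN N f < sumN N g).
  { apply (sumN_lt N f g n1); auto.
    intros m Hm. destruct (Rlt_or_le 0 (f m)) as [Hfm|Hfm].
    - apply Rlt_le, Hfg; auto.
    - pose proof (Hg m Hm). lra. }
  lra.
Qed.

Definition right_limit (f : R -> R) (l : R) : Prop :=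
  forall eps, 0 < eps -> exists delta, 0 < delta /\
    forall h, 0 < h < delta -> Rabs (f h - l) < eps.

Lemma right_limit_lt f g a b d : right_limit f a -> right_limit g b -> a < b -> 0 < d ->
  exists h, 0 < h < d /\ f h < g h.
Proof.
  intros Hf Hg Hab Hd.
  destruct (Hf ((b - a) / 2) ltac:(lra)) as [d1 [Hd1 H1]].
  destruct (Hg ((b - a) / 2) ltac:(lra)) as [d2 [Hd2 H2]].
  set (h := Rmin (Rmin d1 d2) d / 2).
  assert (Hm : 0 < Rmin (Rmin d1 d2) d) by (repeat apply Rmin_glb_lt; lra).
  pose proof (Rmin_l (Rmin d1 d2) d). pose proof (Rmin_r (Rmin d1 d2) d).
  pose proof (Rmin_l d1 d2). pose proof (Rmin_r d1 d2).
  exists h. split; [unfold h; lra|].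
  specialize (H1 h ltac:(unfold h; lra)). specialize (H2 h ltac:(unfold h; lra)).
  apply Rabs_def2 in H1. apply Rabs_def2 in H2. lra.
Qed.

Lemma right_limit_le f g a b d : right_limit f a -> right_limit g b -> 0 < d ->
  (forall h, 0 < h < d -> f h <= g h) -> a <= b.
Proof.
  intros Hf Hg Hd Hfg. apply Rnot_lt_le. intros Hba.
  destruct (right_limit_lt g f b a d Hg Hf Hba Hd) as [h [Hh Hlt]].
  specialize (Hfg h Hh). lra.
Qed.

Lemma right_limit_const c : right_limit (fun _ => c) c.
Proof.
  intros eps Heps. exists 1. split; [lra|]. intros h _.
  rewrite Rminus_diag, Rabs_R0. exact Heps.
Qed.

Lemma continuous_right_limit f x : continuous_nonneg f -> 0 <= x ->
  right_limit (fun h => f (x + h)) (f x).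
Proof.
  intros Hf Hx eps Heps. destruct (Hf x Hx eps Heps) as [d [Hd Hy]].
  exists d. split; [exact Hd|]. intros h Hh. apply Hy; [lra|].
  replace (x + h - x) with h by ring. rewrite Rabs_right; lra.
Qed.

Lemma left_deriv_backward f x L : left_deriv f x L ->
  right_limit (fun h => (f x - f (x - h)) / h) L.
Proof.
  intros Hl eps Heps. destruct (Hl eps Heps) as [d [Hd H]].
  exists d. split; [exact Hd|]. intros h Hh.
  replace ((f x - f (x - h)) / h) with ((f (x + - h) - f x) / - h)
    by (unfold Rminus; field; lra).
  apply H. lra.
Qed.

Lemma derivable_one_sided f x L : derivable_pt_lim f x L ->
  right_deriv f x L /\ left_deriv f x L.
Proof.
  intros Hd. split; intros eps Heps; destruct (Hd eps Heps) as [d Hde];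
    exists d; split; try apply cond_pos; intros h Hh; apply Hde;
    [intro; lra | rewrite Rabs_right; lra | intro; lra | rewrite Rabs_left; lra].
Qed.

Lemma one_sided_derivable_zero f x : left_deriv f x 0 -> right_deriv f x 0 ->
  derivable_pt_lim f x 0.
Proof.
  intros Hl Hr eps Heps.
  destruct (Hl eps Heps) as [d1 [Hd1 H1]]. destruct (Hr eps Heps) as [d2 [Hd2 H2]].
  assert (Hm : 0 < Rmin d1 d2) by (apply Rmin_glb_lt; lra).
  exists (mkposreal _ Hm). intros h Hh0 Hh. simpl in Hh.
  pose proof (Rmin_l d1 d2). pose proof (Rmin_r d1 d2).
  destruct (Rtotal_order h 0) as [Hn|[Hz|Hp]].
  - apply H1. rewrite Rabs_left in Hh by lra. lra.
  - contradiction.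
  - apply H2. rewrite Rabs_right in Hh by lra. lra.
Qed.

Lemma Rdiv_le_cross a b c d : 0 < b -> 0 < d -> a * d <= c * b -> a / b <= c / d.
Proof.
  intros Hb Hd H.
  replace (a / b) with ((a * d) * / (b * d)) by (field; lra).
  replace (c / d) with ((c * b) * / (b * d)) by (field; lra).
  apply Rmult_le_compat_r; [apply Rlt_le, Rinv_0_lt_compat; nra | exact H].
Qed.

Lemma convex_three_point f a b c : convex_nonneg f -> 0 <= a -> a < b < c ->
  (c - a) * f b <= (c - b) * f a + (b - a) * f c.
Proof.
  intros Hc Ha Hb. set (t := (c - b) / (c - a)).
  assert (Ht : 0 <= t <= 1).
  { unfold t. split.
    - apply Rlt_le, Rdiv_lt_0_compat; lra.
    - replace 1 with ((c - a) / (c - a)) by (field; lra).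
      apply Rdiv_le_cross; nra. }
  pose proof (Hc a c t Ha ltac:(lra) Ht) as Hcv.
  replace (t * a + (1 - t) * c) with b in Hcv by (unfold t; field; lra).
  apply (Rmult_le_compat_l (c - a)) in Hcv; [|lra].
  replace ((c - a) * (t * f a + (1 - t) * f c)) with ((c - b) * f a + (b - a) * f c)
    in Hcv by (unfold t; field; lra).
  exact Hcv.
Qed.

Lemma convex_right_deriv_chord f x y L : convex_nonneg f -> 0 <= x < y ->
  right_deriv f x L -> L * (y - x) <= f y - f x.
Proof.
  intros Hc Hxy Hr.
  assert (Hslope : L <= (f y - f x) / (y - x)).
  { apply (right_limit_le _ _ L _ (y - x) Hr (right_limit_const _)); [lra|].
    intros h Hh. pose proof (convex_three_point f x (x + h) y Hc ltac:(lra) ltac:(lra)).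
    apply Rdiv_le_cross; nra. }
  apply (Rmult_le_compat_r (y - x)) in Hslope; [|lra].
  replace ((f y - f x) / (y - x) * (y - x)) with (f y - f x) in Hslope by (field; lra).
  lra.
Qed.

Lemma convex_left_deriv_chord f x y L : convex_nonneg f -> 0 <= y < x ->
  left_deriv f x L -> f x - f y <= L * (x - y).
Proof.
  intros Hc Hxy Hl.
  assert (Hslope : (f x - f y) / (x - y) <= L).
  { apply (right_limit_le _ _ _ L (x - y) (right_limit_const _) (left_deriv_backward _ _ _ Hl));
      [lra|].
    intros h Hh. pose proof (convex_three_point f y (x - h) x Hc ltac:(lra) ltac:(lra)).
    apply Rdiv_le_cross; nra. }
  apply (Rmult_le_compat_r (x - y)) in Hslope; [|lra].
  replace ((f x - f y) / (x - y) * (x - y)) with (f x - f y) in Hslope by (field; lra).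
  lra.
Qed.

Lemma convex_tangent f x y L : convex_nonneg f -> 0 <= x -> 0 <= y ->
  right_deriv f x L -> (0 < x -> left_deriv f x L) -> f x + L * (y - x) <= f y.
Proof.
  intros Hc Hx Hy Hr Hl.
  destruct (Rtotal_order x y) as [H|[H|H]].
  - pose proof (convex_right_deriv_chord f x y L Hc ltac:(lra) Hr). lra.
  - subst. lra.
  - pose proof (convex_left_deriv_chord f x y L Hc ltac:(lra) (Hl ltac:(lra))). lra.
Qed.

Lemma convex_left_le_right f q L1 L2 : convex_nonneg f -> 0 < q ->
  left_deriv f q L1 -> right_deriv f q L2 -> L1 <= L2.
Proof.
  intros Hc Hq Hl Hr.
  apply (right_limit_le _ _ L1 L2 q (left_deriv_backward _ _ _ Hl) Hr Hq).
  intros h Hh. pose proof (convex_three_point f (q - h) q (q + h) Hc ltac:(lra) ltac:(lra)).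
  apply Rdiv_le_cross; nra.
Qed.

Lemma nonincreasing_left_deriv f q L : nonincreasing_nonneg f -> 0 < q ->
  left_deriv f q L -> L <= 0.
Proof.
  intros Hm Hq Hl.
  apply (right_limit_le _ _ L 0 q (left_deriv_backward _ _ _ Hl) (right_limit_const 0) Hq).
  intros h Hh. pose proof (Hm (q - h) q ltac:(lra) ltac:(lra)).
  apply (Rmult_le_reg_r h); [lra|].
  unfold Rdiv. rewrite Rmult_assoc, Rinv_l, Rmult_0_l; lra.
Qed.

Lemma flat_right_deriv f q L d : 0 < d -> (forall h, 0 < h < d -> f (q + h) = f q) ->
  right_deriv f q L -> L = 0.
Proof.
  intros Hd Hflat Hr.
  assert (Hzero : forall h, 0 < h < d -> (f (q + h) - f q) / h = 0).
  { intros h Hh. rewrite Hflat by exact Hh. unfold Rdiv. ring. }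
  apply Rle_antisym.
  - apply (right_limit_le _ _ L 0 d Hr (right_limit_const 0) Hd).
    intros h Hh. rewrite Hzero by exact Hh. lra.
  - apply (right_limit_le _ _ 0 L d (right_limit_const 0) Hr Hd).
    intros h Hh. rewrite Hzero by exact Hh. lra.
Qed.

Lemma cost_right_deriv C dC y : cost_assumption C dC -> 0 <= y -> right_deriv C y (dC y).
Proof.
  intros [_ [_ [_ [Hd [_ [Hr _]]]]]] Hy.
  destruct (Req_dec y 0) as [->|Hne]; [exact Hr|].
  apply derivable_one_sided, Hd. lra.
Qed.

Lemma cost_tangent C dC a b : cost_assumption C dC -> 0 <= a -> 0 <= b ->
  C a + dC a * (b - a) <= C b.
Proof.
  intros HC Ha Hb. apply convex_tangent; auto.
  - apply HC.
  - apply cost_right_deriv; auto.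
  - intros Hpos. destruct HC as [_ [_ [_ [Hd _]]]]. apply derivable_one_sided, Hd, Hpos.
Qed.

Lemma cost_deriv_mono C dC a b : cost_assumption C dC -> 0 <= a <= b -> dC a <= dC b.
Proof.
  intros HC Hab.
  pose proof (cost_tangent C dC a b HC ltac:(lra) ltac:(lra)).
  pose proof (cost_tangent C dC b a HC ltac:(lra) ltac:(lra)).
  destruct (Req_dec a b) as [->|Hne]; [lra|]. nra.
Qed.

Lemma continuous_clamp f : continuous_nonneg f ->
  forall x, continuity_pt (fun y => f (Rmax 0 y)) x.
Proof.
  intros Hf x eps Heps.
  destruct (Hf (Rmax 0 x) (Rmax_l 0 x) eps Heps) as [d [Hd Hy]].
  exists d; split; [exact Hd|].
  intros y [_ Hyx]. simpl in *. unfold R_dist in *.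
  apply Hy; [apply Rmax_l|].
  eapply Rle_lt_trans; [|exact Hyx].
  unfold Rmax; repeat destruct Rle_dec; unfold Rabs; repeat destruct Rcase_abs; lra.
Qed.

Lemma integrable_nonneg f a b : continuous_nonneg f -> 0 <= a <= b ->
  Riemann_integrable f a b.
Proof.
  intros Hf Hab.
  refine (@Riemann_integrable_ext (fun y => f (Rmax 0 y)) f a b _ _).
  - intros x Hx. rewrite Rmin_left in Hx by lra. rewrite Rmax_right in Hx by lra.
    rewrite Rmax_right by lra. reflexivity.
  - apply continuity_implies_RiemannInt; [lra|]. intros; apply continuous_clamp; auto.
Qed.

Lemma integral_val f b (pr : Riemann_integrable f 0 b) : integral f 0 b = RiemannInt pr.
Proof.
  unfold integral.
  destruct (epsilon_spec (inhabits 0)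
    (fun I => exists pr : Riemann_integrable f 0 b, RiemannInt pr = I)) as [pr' Hpr'].
  { exists (RiemannInt pr), pr; reflexivity. }
  rewrite <- Hpr'. apply RiemannInt_P5.
Qed.

Lemma integral_zero f : integral f 0 0 = 0.
Proof. rewrite (integral_val f 0 (RiemannInt_P7 f 0)). apply RiemannInt_P9. Qed.

Lemma integral_increment_bounds f a b : continuous_nonneg f -> nonincreasing_nonneg f ->
  0 <= a <= b ->
  f b * (b - a) <= integral f 0 b - integral f 0 a <= f a * (b - a).
Proof.
  intros Hf Hm Hab.
  pose proof (integrable_nonneg f 0 a Hf ltac:(lra)) as p1.
  pose proof (integrable_nonneg f a b Hf Hab) as p2.
  pose proof (integrable_nonneg f 0 b Hf ltac:(lra)) as p3.
  rewrite (integral_val f b p3), (integral_val f a p1), <- (RiemannInt_P26 p1 p2 p3).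
  replace (RiemannInt p1 + RiemannInt p2 - RiemannInt p1) with (RiemannInt p2) by ring.
  apply RiemannInt_const_bound; [lra|]. intros; split; apply Hm; lra.
Qed.

Lemma integral_supergradient f a b : continuous_nonneg f -> nonincreasing_nonneg f ->
  0 <= a -> 0 <= b -> integral f 0 b - integral f 0 a <= f a * (b - a).
Proof.
  intros Hf Hm Ha Hb. destruct (Rle_dec a b) as [Hab|Hba].
  - apply (integral_increment_bounds f a b Hf Hm). lra.
  - pose proof (integral_increment_bounds f b a Hf Hm ltac:(lra)). lra.
Qed.

Definition upd (x : nat -> R) (n : nat) (h : R) : nat -> R :=
  fun m => if Nat.eq_dec m n then x m + h else x m.

Lemma nonneg_upd N x n h : nonneg_vec N x -> 0 <= h -> nonneg_vec N (upd x n h).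
Proof. intros Hx Hh m Hm. unfold upd. destruct Nat.eq_dec; specialize (Hx m Hm); lra. Qed.

Lemma welfare_upd N p C x n h : (n < N)%nat ->
  welfare N p C (upd x n h) = welfare N p C x
    + (integral p 0 (total N x + h) - integral p 0 (total N x))
    - (C n (x n + h) - C n (x n)).
Proof.
  intros Hn.
  assert (Hupd : forall m, m <> n -> upd x n h m = x m)
    by (intros m Hm; unfold upd; destruct Nat.eq_dec; congruence).
  assert (Hn' : upd x n h n = x n + h) by (unfold upd; destruct Nat.eq_dec; congruence).
  unfold welfare, total.
  rewrite (sumN_upd N x (upd x n h) n Hn Hupd).
  rewrite (sumN_upd N (fun m => C m (x m)) (fun m => C m (upd x n h m)) n Hn)
    by (intros m Hm; rewrite Hupd; auto).
  rewrite Hn'. replace (x n + h - x n) with h by ring. ring.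
Qed.

Lemma profitable_deviation N p C dC y n :
  cost_assumption (C n) (dC n) -> continuous_nonneg p -> nonincreasing_nonneg p ->
  nonneg_vec N y -> (n < N)%nat -> dC n (y n) < p (total N y) ->
  exists h, 0 < h /\ welfare N p C y < welfare N p C (upd y n h).
Proof.
  intros HC Hpc Hpm Hy Hn Hlt.
  set (Y := total N y) in *.
  assert (HY : 0 <= Y) by (apply sumN_nonneg; auto).
  destruct (right_limit_lt _ _ _ _ 1
              (cost_right_deriv (C n) (dC n) (y n) HC (Hy n Hn))
              (continuous_right_limit p Y Hpc HY) Hlt ltac:(lra)) as [h [Hh Hq]].
  exists h. split; [lra|].
  assert (Hcost : C n (y n + h) - C n (y n) < h * p (Y + h)).
  { apply (Rmult_lt_compat_l h) in Hq; [|lra].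
    replace (h * ((C n (y n + h) - C n (y n)) / h)) with (C n (y n + h) - C n (y n))
      in Hq by (field; lra).
    exact Hq. }
  pose proof (integral_increment_bounds p Y (Y + h) Hpc Hpm ltac:(lra)) as [Hint _].
  rewrite welfare_upd by exact Hn. fold Y.
  replace (Y + h - Y) with h in Hint by ring. lra.
Qed.

Lemma social_optimum_marginal N p C dC xS n :
  cost_assumption (C n) (dC n) -> continuous_nonneg p -> nonincreasing_nonneg p ->
  social_optimum N p C xS -> (n < N)%nat -> p (total N xS) <= dC n (xS n).
Proof.
  intros HC Hpc Hpm [HxS Hopt] Hn. apply Rnot_lt_le. intros Hlt.
  destruct (profitable_deviation N p C dC xS n HC Hpc Hpm HxS Hn Hlt) as [h [Hh Hw]].
  pose proof (Hopt (upd xS n h) (nonneg_upd N xS n h HxS ltac:(lra))). lra.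
Qed.

(* Under Assumption 4 the optimal welfare is positive: some supplier can
   profitably deviate from producing nothing at all. *)
Lemma social_optimum_welfare_pos N p C dC xS n0 :
  (forall n, (n < N)%nat -> cost_assumption (C n) (dC n)) ->
  continuous_nonneg p -> nonincreasing_nonneg p ->
  social_optimum N p C xS -> (n0 < N)%nat -> dC n0 0 < p 0 ->
  0 < welfare N p C xS.
Proof.
  intros HC Hpc Hpm [_ Hopt] Hn0 Hlt.
  set (z := fun _ : nat => 0).
  assert (Hz : nonneg_vec N z) by (intros m _; unfold z; lra).
  assert (Hz0 : welfare N p C z = 0).
  { unfold welfare, total, z. rewrite sumN_zero, integral_zero.
    rewrite (sumN_ext N _ (fun _ => 0))
      by (intros m Hm; destruct (HC m Hm) as [_ [_ [_ [_ [_ [_ HC0]]]]]]; exact HC0).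
    rewrite sumN_zero. ring. }
  assert (Hlt' : dC n0 (z n0) < p (total N z)) by (unfold total, z; rewrite sumN_zero; exact Hlt).
  destruct (profitable_deviation N p C dC z n0 (HC n0 Hn0) Hpc Hpm Hz Hn0 Hlt')
    as [h [Hh Hw]].
  pose proof (Hopt (upd z n0 h) (nonneg_upd N z n0 h Hz ltac:(lra))). lra.
Qed.

(* At a Cournot candidate, total output is positive: otherwise the supplier of
   Assumption 4 would face price [p 0] above its marginal cost [dC n 0]. *)
Lemma cournot_total_pos N p dpr dpl dC x n0 :
  cournot_candidate N p dpr dpl dC x -> (n0 < N)%nat -> dC n0 0 < p 0 ->
  0 < total N x.
Proof.
  intros [Hx Hfoc] Hn0 Hlt. apply Rnot_le_lt. intros Hle.
  assert (HX : total N x = 0) by (pose proof (sumN_nonneg N x Hx); unfold total in *; lra).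
  assert (Hx0 : x n0 = 0)
    by (pose proof (sumN_ge_term N x n0 Hx Hn0); pose proof (Hx n0 Hn0); unfold total in *; lra).
  destruct (Hfoc n0 Hn0) as [_ H]. rewrite HX, Hx0 in H. lra.
Qed.

(* A supplier with positive output sandwiches its marginal cost between the
   two one-sided marginal revenues, hence [dpr X <= dpl X]. *)
Lemma cournot_right_le_left N p dpr dpl dC x :
  cournot_candidate N p dpr dpl dC x -> 0 < total N x ->
  dpr (total N x) <= dpl (total N x).
Proof.
  intros [_ Hfoc] HX.
  destruct (sumN_pos_witness N x HX) as [n [Hn Hxn]].
  destruct (Hfoc n Hn) as [H1 H2]. specialize (H1 Hxn). nra.
Qed.

(* If total output is at least the optimal one and the prices agree, the
   left derivative of [p] at [X] is nonnegative: a supplier producing more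
   than at the optimum has marginal cost at least the common price. *)
Lemma cournot_left_deriv_nonneg N p dpr dpl C dC x xS :
  (forall n, (n < N)%nat -> cost_assumption (C n) (dC n)) ->
  continuous_nonneg p -> nonincreasing_nonneg p ->
  cournot_candidate N p dpr dpl dC x -> social_optimum N p C xS ->
  0 < total N x -> total N xS <= total N x -> p (total N x) = p (total N xS) ->
  0 <= dpl (total N x).
Proof.
  intros HC Hpc Hpm [Hx Hfoc] HxS HX Hle Heq.
  destruct (sumN_pos_witness N x HX) as [n1 [Hn1 Hx1]].
  destruct (sumN_dominating_term N x xS n1 (proj1 HxS) Hn1 Hx1 Hle)
    as [n [Hn [Hxn Hdom]]].
  pose proof (social_optimum_marginal N p C dC xS n (HC n Hn) Hpc Hpm HxS Hn) as Hopt.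
  pose proof (cost_deriv_mono (C n) (dC n) (xS n) (x n) (HC n Hn)
                (conj (proj1 HxS n Hn) Hdom)) as Hmono.
  destruct (Hfoc n Hn) as [H1 _]. specialize (H1 Hxn). nra.
Qed.

Lemma cournot_price_flat N p dpr dpl C dC x xS :
  (forall n, (n < N)%nat -> cost_assumption (C n) (dC n)) ->
  price_assumption p dpr dpl -> convex_nonneg p ->
  cournot_candidate N p dpr dpl dC x -> social_optimum N p C xS ->
  0 < total N x -> p (total N x) = p (total N xS) ->
  dpl (total N x) = 0 /\ dpr (total N x) = 0.
Proof.
  intros HC [Hpc [_ [Hpm [_ [Hdpr Hdpl]]]]] Hconv Hx HxS HX Heq.
  set (X := total N x) in *. set (XS := total N xS) in *.
  assert (Hl : left_deriv p X (dpl X)) by (apply Hdpl; exact HX).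
  assert (Hr : right_deriv p X (dpr X)) by (apply Hdpr; lra).
  pose proof (nonincreasing_left_deriv p X (dpl X) Hpm HX Hl).
  pose proof (cournot_right_le_left N p dpr dpl dC x Hx HX) as Hrl. fold X in Hrl.
  destruct (Rlt_or_le X XS) as [Hlt|Hge].
  - (* [p] is constant on [X, XS], so its right derivative at [X] vanishes. *)
    assert (dpr X = 0).
    { apply (flat_right_deriv p X (dpr X) (XS - X)); [lra| |exact Hr].
      intros h Hh. pose proof (Hpm X (X + h) ltac:(lra) ltac:(lra)).
      pose proof (Hpm (X + h) XS ltac:(lra) ltac:(lra)). lra. }
    lra.
  - pose proof (cournot_left_deriv_nonneg N p dpr dpl C dC x xS HC Hpc Hpm Hx HxS HX Hge Heq)
      as Hl0. fold X in Hl0.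
    pose proof (convex_left_le_right p X (dpl X) (dpr X) Hconv HX Hl Hr).
    lra.
Qed.

(* With a flat price at [X], every supplier's marginal cost at the candidate
   is at least the price, and equal to it when it produces; by the tangent
   inequality, moving to [xS] costs at least [p X * (XS - X)]. *)
Lemma cournot_cost_excess N p dpr dpl C dC x xS :
  (forall n, (n < N)%nat -> cost_assumption (C n) (dC n)) ->
  cournot_candidate N p dpr dpl dC x -> nonneg_vec N xS ->
  dpl (total N x) = 0 -> dpr (total N x) = 0 ->
  p (total N x) * (total N xS - total N x)
    <= sumN N (fun m => C m (xS m)) - sumN N (fun m => C m (x m)).
Proof.
  intros HC [Hx Hfoc] HxS Hdl Hdr.
  unfold total. rewrite <- !sumN_minus, <- sumN_scal. fold (total N x).
  apply sumN_le. intros m Hm.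
  pose proof (cost_tangent (C m) (dC m) (x m) (xS m) (HC m Hm) (Hx m Hm) (HxS m Hm)).
  destruct (Hfoc m Hm) as [H1 H2]. rewrite Hdl in H1. rewrite Hdr in H2.
  destruct (Rle_lt_or_eq_dec _ _ (Hx m Hm)) as [Hpos|Hzero].
  - specialize (H1 Hpos). assert (dC m (x m) = p (total N x)) by lra. nra.
  - rewrite <- Hzero in *. pose proof (HxS m Hm). nra.
Qed.

Theorem proposition8
  (N : nat) (p dpr dpl : R -> R) (C dC : nat -> R -> R) (x xS : nat -> R)
  (HA1 : forall n, (n < N)%nat -> cost_assumption (C n) (dC n))
  (HA2 : price_assumption p dpr dpl)
  (HA3 : exists Rb, 0 < Rb /\ forall n, (n < N)%nat -> p Rb <= dC n 0)
  (HA4 : exists n, (n < N)%nat /\ dC n 0 < p 0)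
  (Hconv : convex_nonneg p)
  (Hx : cournot_candidate N p dpr dpl dC x)
  (HxS : social_optimum N p C xS)
  (Heq : p (total N x) = p (total N xS)) :
  0 < total N x /\ derivable_pt_lim p (total N x) 0 /\
  efficiency N p C x xS = 1.
Proof.
  pose proof HA2 as [Hpc [_ [Hpm [_ [Hdpr Hdpl]]]]].
  destruct HA4 as [n0 [Hn0 Hlt0]].
  assert (HX : 0 < total N x) by exact (cournot_total_pos N p dpr dpl dC x n0 Hx Hn0 Hlt0).
  destruct (cournot_price_flat N p dpr dpl C dC x xS HA1 HA2 Hconv Hx HxS HX Heq)
    as [Hdl Hdr].
  split; [exact HX|]. split.
  { apply one_sided_derivable_zero.
    - rewrite <- Hdl. apply Hdpl, HX.
    - rewrite <- Hdr. apply Hdpr. lra. }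
  (* Welfare at the candidate is at least the optimal welfare, which is positive. *)
  pose proof (social_optimum_welfare_pos N p C dC xS n0 HA1 Hpc Hpm HxS Hn0 Hlt0) as Hpos.
  pose proof (proj2 HxS x (proj1 Hx)) as Hopt.
  pose proof (cournot_cost_excess N p dpr dpl C dC x xS HA1 Hx (proj1 HxS) Hdl Hdr) as Hcost.
  pose proof (integral_supergradient p (total N x) (total N xS) Hpc Hpm
                ltac:(lra) (sumN_nonneg N xS (proj1 HxS))) as Hint.
  unfold efficiency. unfold welfare in *.
  replace (integral p 0 (total N x) - sumN N (fun n => C n (x n)))
    with (integral p 0 (total N xS) - sumN N (fun n => C n (xS n))) by lra.
  field. lra.
Qed.
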